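(* Assume each $J_j'$ is a bijection of $\mathbb{R}$, and write $(\nabla J)^{-1}(\alpha):=((J_j')^{-1}(\alpha_j))_{j}$. Define, for $z=(q,\tilde\theta)\in\mathbb{R}^n\times\mathbb{R}^{|\mathcal E|}$ and $\sigma=(\alpha,\lambda,\eta,\nu)\in\mathbb{R}^n\times\mathbb{R}\times\mathbb{R}^{2|\mathcal E|}\times\mathbb{R}^n$, \[ \hat L(z,\sigma)=\sum_{j=1}^n J_j\big((\nabla J)^{-1}(\alpha)_j\big)+\alpha^T\big(q-(\nabla J)^{-1}(\alpha)\big)-\tfrac12\nu^TD\nu+\nu^T(q-d-CB\tilde\theta)-\lambda\mathbf 1^T(q-d)+\eta^T\big(H^T(q-d)-F\big), \] and the closed-loop system \[ T^z\dot z=-\nabla_z\hat L(z,\sigma),\qquad T^\sigma\dot\sigma=\big[\nabla_\sigma\hat L(z,\sigma)\big]^+_\eta, \] where $T^z,T^\sigma$ are diagonal with positive diagonal entries and the projection acts only on the $\eta$-components. Let $(z^*,\sigma^* )$, with $\eta^*\ge0$, be an equilibrium of this system. If a trajectory $(z(t),\sigma(t))$ of the system with $\eta(0)\ge0$ satisfies $\hat L(z^*,\sigma(t))\equiv\hat L(z^*,\sigma^* )$ and $\hat L(z(t),\sigma^* )\equiv\hat L(z^*,\sigma^* )$ for all $t\ge0$, then $\dot z\equiv0$ and $\dot\sigma\equiv0$.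
   Context: $(\mathcal N,\mathcal E)$ is a connected directed graph with $\mathcal N=\{1,\dots,n\}$; $C$ is its incidence matrix ($C_{j,e}=1$ if $e=(j,k)$, $-1$ if $e=(k,j)$, $0$ otherwise). $B$ and $D$ are diagonal with positive diagonal entries. $L:=CBC^T$, $H\in\mathbb{R}^{n\times 2|\mathcal E|}$ with $H^T=\begin{bmatrix} BC^TL^\dagger\\ -BC^TL^\dagger\end{bmatrix}$ ($L^\dagger$ Moore–Penrose inverse), $F=\begin{bmatrix}\overline F\\-\underline F\end{bmatrix}\in\mathbb{R}^{2|\mathcal E|}$, $d\in\mathbb{R}^n$. Each $J_j:\mathbb{R}\to\mathbb{R}$ is strictly convex and twice differentiable. Projection: for vectors $y,u$ of equal length, $([y]^+_u)_j=y_j$ if $y_j>0$ or $u_j>0$, and $0$ otherwise; here applied to the $\eta$-block of the gradient with $u=\eta$. (This system models generators' price-bidding dynamics, market dispatch/pricing dynamics, and linearized swing dynamics with $\omega\equiv\nu$.) *)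

From HB Require Import structures.
From mathcomp Require Import all_boot all_order all_algebra.
From mathcomp Require Import all_classical all_reals all_analysis.
Set Implicit Arguments. Unset Strict Implicit. Unset Printing Implicit Defensive.
Import Order.TTheory GRing.Theory Num.Theory.
Import numFieldNormedType.Exports.
Local Open Scope ring_scope.

Section Defs.
Variable R : realType.

Definition incidence (n m : nat) (src dst : 'I_m -> 'I_n) : 'M[R]_(n, m) :=
  \matrix_(j < n, e < m)
    (if src e == j then 1 else if dst e == j then -1 else 0).

(* Undirected adjacency of the underlying graph (for weak connectivity). *)
Definition adj (n m : nat) (src dst : 'I_m -> 'I_n) : rel 'I_n :=
  fun i j => [exists e, ((src e == i) && (dst e == j)) ||
                        ((src e == j) && (dst e == i))].

Definition connected_digraph (n m : nat) (src dst : 'I_m -> 'I_n) : Prop :=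
  (forall e, src e != dst e) /\
  injective (fun e => (src e, dst e)) /\
  (forall i j, connect (adj src dst) i j).

Definition posdiag (k : nat) (A : 'M[R]_k) : Prop :=
  is_diag_mx A /\ forall i, 0 < A i i.

Definition is_MP_inverse (k l : nat) (A : 'M[R]_(k, l)) (X : 'M[R]_(l, k)) : Prop :=
  [/\ A *m X *m A = A, X *m A *m X = X,
      (A *m X)^T = A *m X & (X *m A)^T = X *m A].

Definition strictly_convex (f : R -> R) : Prop :=
  forall x y a : R, x != y -> 0 < a -> a < 1 ->
    f (a * x + (1 - a) * y) < a * f x + (1 - a) * f y.

Definition twice_differentiable (f : R -> R) : Prop :=
  forall x : R, derivable f x 1 /\ derivable (derive1 f) x 1.

Definition dotv (k : nat) (u v : 'cV[R]_k) : R := (u^T *m v) 0 0.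

Definition grad (k : nat) (f : 'cV[R]_k -> R) (x : 'cV[R]_k) : 'cV[R]_k :=
  \col_i derive1 (fun s : R => f (x + s *: delta_mx i 0)) 0.

Definition proj_plus (k : nat) (y u : 'cV[R]_k) : 'cV[R]_k :=
  \col_j (if (0 < y j 0) || (0 < u j 0) then y j 0 else 0).

Definition dvec (k : nat) (x : R -> 'cV[R]_k) (t : R) : 'cV[R]_k :=
  \col_i derive1 (fun s => x s i 0) t.

Definition vderivable (k : nat) (x : R -> 'cV[R]_k) (t : R) : Prop :=
  forall i, derivable (fun s => x s i 0) t 1.

Definition Hmat (n m : nat) (C : 'M[R]_(n, m)) (B : 'M[R]_m) (Ldag : 'M[R]_n)
  : 'M[R]_(n, m + m) :=
  (col_mx (B *m C^T *m Ldag) (- (B *m C^T *m Ldag)))^T.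

(* The function \hat L(z, sigma), z = (q, th), sigma = (a, lam, eta, nu). *)
Definition Lhat (n m : nat) (J Jinv : 'I_n -> R -> R)
  (D : 'M[R]_n) (d : 'cV[R]_n) (C : 'M[R]_(n, m)) (B : 'M[R]_m)
  (H : 'M[R]_(n, m + m)) (F : 'cV[R]_(m + m))
  (q : 'cV[R]_n) (th : 'cV[R]_m)
  (a : 'cV[R]_n) (lam : R) (eta : 'cV[R]_(m + m)) (nu : 'cV[R]_n) : R :=
  let g := \col_j Jinv j (a j 0) in
  \sum_j J j (g j 0) + dotv a (q - g) - 2^-1 * dotv nu (D *m nu)
  + dotv nu (q - d - C *m B *m th) - lam * dotv (const_mx 1) (q - d)
  + dotv eta (H^T *m (q - d) - F).

End Defs.

From mathcomp Require Import all_boot all_order all_algebra.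
From mathcomp Require Import all_classical all_reals all_analysis.
From mathcomp Require Import ring lra.
Import Order.TTheory GRing.Theory Num.Theory.
Import numFieldNormedType.Exports.
Local Open Scope ring_scope.

(* Write sigma = (alpha, lambda, eta, nu), and let (qs, ths) and
   sigma_s = (als, lams, etas, nus) form the equilibrium.  The gap
   Lh(qs, ths, sigma_s) - Lh(qs, ths, sigma) is a sum of tangent-line gaps of the
   Legendre transforms of the J_j at als, of the squares D_jj (nu_j - nus_j)^2 / 2
   and of -eta^T (H^T (qs - d) - F); all three are nonnegative once eta >= 0, which
   the projected eta-dynamics preserve.  Hence Lh(qs, ths, sigma(t)) =
   Lh(qs, ths, sigma_s) forces alpha(t) = als, nu(t) = nus and complementary
   slackness for eta(t).  The alpha-dynamics then pin q(t) to qs, and the remaining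
   velocities vanish at these values. *)

Section RealFunctions.
Context {R : realType}.
Implicit Types f : R -> R.
Local Open Scope classical_set_scope.

Lemma derive1_cvg_right {f x} u : derivable f x 1 ->
  (fun k => k^-1 * (f (k * u + x) - f x)) @ 0^'+ --> u * derive1 f x.
Proof.
move=> /derivable1_diffP df; apply: cvg_dnbhs_at_right.
have -> : u * derive1 f x = 'D_u f x.
  by rewrite derive1E !deriveE // -{2}[u]mulr1 -[u * 1]/(u *: (1 : R)) linearZ.
exact: diff_derivable.
Qed.

Lemma derive1_eq0_right f t : derivable f t 1 ->
  (forall s, t <= s -> f s = f t) -> derive1 f t = 0.
Proof.
move=> df fc; have D := derive1_cvg_right 1 df; rewrite mul1r in D.
have Q0 : \forall k \near 0^'+, k^-1 * (f (k * 1 + t) - f t) = 0.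
  near=> k; rewrite fc ?subrr ?mulr0 // mulr1 lerDr ltW //.
apply/eqP; rewrite eq_le; apply/andP; split.
  by apply: (cvgr_to_le D); near do rewrite (near Q0 _) //.
by apply: (cvgr_to_ge D); near do rewrite (near Q0 _) //.
Unshelve. all: by end_near. Qed.

Lemma is_derive1_remainder f x l (e : R -> R) : e z @[z --> x] --> 0 ->
  (forall z, `|f z - f x - l * (z - x)| <= `|e z| * `|z - x|) ->
  is_derive x 1 f l.
Proof.
move=> e0 fe; apply/is_derive1_caratheodory.
exists (fun z => if z == x then l else (f z - f x) / (z - x)).
split; last by rewrite eqxx.
  move=> z; case: eqP => [->|/eqP]; first by rewrite !subrr mulr0.
  by rewrite -subr_eq0 => /divfK ->.
apply/cvgrPdist_le => eps eps0; rewrite eqxx.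
near=> z; case: eqP => [_|/eqP zx]; first by rewrite subrr normr0 ltW.
have zx0 : 0 < `|z - x| by rewrite normr_gt0 subr_eq0.
rewrite distrC.
have -> : (f z - f x) / (z - x) - l = (f z - f x - l * (z - x)) / (z - x).
  by field; rewrite subr_eq0.
rewrite normrM normrV ?unitfE ?subr_eq0 // ler_pdivrMr //.
apply: le_trans (fe z) _; rewrite ler_pM2r //.
by near: z; apply: cvgr0_norm_le.
Unshelve. all: by end_near. Qed.

Lemma is_derive_shift_add {psi : R -> R} {a l : R} (c : R) :
  is_derive a 1 psi l -> is_derive (0 : R) 1 (fun s => psi (a + s) + c) l.
Proof.
move=> dpsi.
have -> : (fun s => psi (a + s) + c) = (psi \o shift a) + cst c.
  by apply/funext => s /=; rewrite [a + s]addrC.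
have dcomp : is_derive (0 : R) 1 (psi \o shift a) (l * 1).
  by apply: is_derive1_comp; [rewrite /= add0r | exact: is_derive_shift].
by have := is_deriveD dcomp (is_derive_cst c (0 : R) (1 : R)); rewrite mulr1 addr0.
Qed.

Lemma nonneg_forward_invariant f a :
  (forall t, a <= t -> derivable f t 1) -> 0 <= f a ->
  (forall t, a <= t -> f t < 0 -> 0 <= derive1 f t) ->
  forall t, a <= t -> 0 <= f t.
Proof.
(* s0 is the last time in [a, t1] where f >= 0; f < 0 and hence f' >= 0 on
   (s0, t1], so f s0 <= f t1 < 0, a contradiction. *)
move=> df fa0 df0 t1 at1; rewrite leNgt; apply/negP => ft1.
have cf t : a <= t -> {for t, continuous f}.
  by move=> /df /derivable1_diffP /differentiable_continuous.
pose S := [set s | a <= s <= t1 /\ 0 <= f s].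
have hS : has_sup S.
  by split; [exists a; rewrite /S /= lexx at1 | exists t1 => s [/andP[]]].
pose s0 := sup S.
have s0ub s : S s -> s <= s0 by exact: sup_upper_bound.
have as0 : a <= s0 by apply: s0ub; rewrite /S /= lexx at1.
have s0t1 : s0 <= t1 by apply: ge_sup; [case: hS | move=> s [/andP[]]].
have fs0 : 0 <= f s0.
  rewrite leNgt; apply/negP => fneg.
  have e0 : 0 < - f s0 / 2 by rewrite divr_gt0 // oppr_gt0.
  have /cvgrPdist_lt /(_ _ e0) /nbhs_ballP [d d0 fd] := cf s0 as0.
  have [x [/andP[ax xt1] fx] s0x] := sup_adherent d0 hS.
  have xs0 : x <= s0 by apply: s0ub; rewrite /S /= ax xt1.
  have /fd : ball s0 d x.
    by rewrite /ball /= ger0_norm ?subr_ge0 //; rewrite -/s0 in s0x; lra.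
  by rewrite ltr_distlC => /andP[]; lra.
have fneg x : s0 < x -> x <= t1 -> f x < 0.
  move=> s0x xt1; rewrite ltNge; apply/negP => fx.
  have : S x by split; [rewrite xt1 andbT; lra | exact: fx].
  by move/s0ub; lra.
have : f s0 <= f t1.
  apply: ger0_derive1_ndecr => //.
  - by move=> x; rewrite in_itv /= => /andP[s0x _]; apply: df; lra.
  - move=> x; rewrite in_itv /= => /andP[s0x xt1].
    by apply: df0; [lra | apply: fneg => //; exact: ltW].
  - apply: continuous_in_subspaceT => x; rewrite inE /= in_itv /= => /andP[s0x _].
    by apply: cf; lra.
lra.
Qed.

(* The Legendre transform of f, where g is meant to be the inverse of f'. *)
Definition legendre (f g : R -> R) (b : R) := b * g b - f (g b).

Section StrictlyConvex.
Context {J : R -> R}.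
Hypothesis convexJ : strictly_convex J.
Hypothesis derivableJ : forall x, derivable J x 1.

Lemma convex_tangent_le x y : J x + derive1 J x * (y - x) <= J y.
Proof.
have [->|yx] := eqVneq y x; first by rewrite subrr mulr0 addr0.
rewrite -lerBrDl mulrC.
apply: (cvgr_to_le (derive1_cvg_right (y - x) (derivableJ x))).
near=> k; have k0 : 0 < k by [].
have k1 : k < 1 by near: k; exact: nbhs_right_lt.
have := convexJ y x k yx k0 k1.
rewrite (_ : k * y + (1 - k) * x = k * (y - x) + x); last by ring.
by move=> ?; rewrite ler_pdivrMl //; lra.
Unshelve. all: by end_near. Qed.

Lemma convex_tangent_lt x y : y != x -> J x + derive1 J x * (y - x) < J y.
Proof.
move=> yx; have xy : x != y by rewrite eq_sym.
have h0 : 0 < (2 : R)^-1 by rewrite invr_gt0 ltr0n.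
have h1 : (2 : R)^-1 < 1 by rewrite invf_lt1 // ltr1n.
have := convexJ x y 2^-1 xy h0 h1; have := convex_tangent_le x ((x + y) / 2).
rewrite (_ : 2^-1 * x + (1 - 2^-1) * y = (x + y) / 2); last by field.
rewrite (_ : (x + y) / 2 - x = (y - x) / 2); last by field.
set m := J _; set D := derive1 J x.
have -> : D * ((y - x) / 2) = D * (y - x) / 2 by ring.
lra.
Qed.

Section Legendre.
Context {g : R -> R}.
Hypothesis gK : cancel g (derive1 J).

Lemma legendre_tangent_le a b : legendre J g a + g a * (b - a) <= legendre J g b.
Proof. by have := convex_tangent_le (g b) (g a); rewrite gK /legendre; lra. Qed.

Lemma legendre_tangent_lt a b : b != a ->
  legendre J g a + g a * (b - a) < legendre J g b.
Proof.
move=> ba; have gba : g a != g b by apply: contra_neq ba => /(can_inj gK).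
by have := convex_tangent_lt (g b) (g a) gba; rewrite gK /legendre; lra.
Qed.

Hypothesis derivable_derive1J : forall x, derivable (derive1 J) x 1.
Hypothesis derive1JK : cancel (derive1 J) g.

Lemma inverse_derive1_continuous : continuous g.
Proof.
move=> a; rewrite -[a]gK.
suff : {near derive1 J (g a), continuous g} by move/nbhs_singleton.
apply: near_can_continuous; near=> z; first exact: derive1JK.
exact/differentiable_continuous/derivable1_diffP/derivable_derive1J.
Unshelve. all: by end_near. Qed.

Lemma is_derive_legendre (a : R) : is_derive a 1 (legendre J g) (g a).
Proof.
apply: (@is_derive1_remainder _ _ _ (fun z => g z - g a)).
  rewrite -(subrr (g a)); apply: cvgB; last exact: cvg_cst.
  exact: inverse_derive1_continuous.
(* The two tangent inequalities squeeze the remainder between 0 and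
   (g z - g a) (z - a). *)
move=> z; rewrite -normrM.
have := legendre_tangent_le a z; have := legendre_tangent_le z a.
set X := _ - _ - _; set P := (g z - g a) * (z - a) => le1 le2.
have : 0 <= X <= P by apply/andP; split; rewrite /X /P; nra.
by move=> /andP[X0 XP]; rewrite (ger0_norm X0) (le_trans XP (ler_norm P)).
Qed.

End Legendre.
End StrictlyConvex.
End RealFunctions.

Section Matrices.
Context {R : realType}.

Lemma dotvE k (u v : 'cV[R]_k) : dotv u v = \sum_j u j 0 * v j 0.
Proof. by rewrite /dotv !mxE; apply: eq_bigr => j _; rewrite mxE. Qed.

Lemma dotvBr k (u v w : 'cV[R]_k) : dotv u (v - w) = dotv u v - dotv u w.
Proof. by rewrite /dotv mulmxBr !mxE. Qed.

Lemma dotv_mulmx k l (u : 'cV[R]_k) (A : 'M[R]_(k, l)) v :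
  dotv u (A *m v) = dotv (A^T *m u) v.
Proof. by rewrite /dotv trmx_mul trmxK mulmxA. Qed.

Lemma diag_mulmxE k (T : 'M[R]_k) (v : 'cV[R]_k) i :
  is_diag_mx T -> (T *m v) i 0 = T i i * v i 0.
Proof.
move=> /is_diag_mxP diagT; rewrite mxE (bigD1 i) //= big1 ?addr0 // => j ji.
by rewrite diagT ?mul0r // eq_sym.
Qed.

Lemma posdiag_mulmx_eq0 {k} {T : 'M[R]_k} {v : 'cV[R]_k} :
  posdiag T -> T *m v = 0 -> v = 0.
Proof.
move=> [diagT T_gt0] /matrixP Tv0; apply/matrixP => i z; rewrite (ord1 z) mxE.
move: (Tv0 i 0); rewrite diag_mulmxE // mxE => /eqP.
by rewrite mulf_eq0 gt_eqF // => /eqP.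
Qed.

Lemma posdiag_mulmx_ge0 {k} {T : 'M[R]_k} {v : 'cV[R]_k} i :
  posdiag T -> 0 <= (T *m v) i 0 -> 0 <= v i 0.
Proof. by move=> [diagT T_gt0]; rewrite diag_mulmxE // pmulr_rge0. Qed.

Lemma proj_plus_eq0P {k} {y u : 'cV[R]_k} : (forall j, 0 <= u j 0) ->
  proj_plus y u = 0 <-> forall j, y j 0 <= 0 /\ y j 0 * u j 0 = 0.
Proof.
move=> u_ge0; split => [/matrixP yu0 j | yu0].
  move: (yu0 j 0); rewrite !mxE.
  case: ifP => [/orP[y_gt0|u_gt0] y0|]; first by move: y_gt0; rewrite y0 ltxx.
    by rewrite y0 mul0r lexx.
  move/negbT; rewrite negb_or -!leNgt => /andP[y_le0 u_le0] _; split => //.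
  by rewrite (_ : u j 0 = 0) ?mulr0 //; apply/eqP; rewrite eq_le u_le0 u_ge0.
apply/matrixP => j z; rewrite (ord1 z) !mxE; case: ifP => // /orP[y_gt0|u_gt0].
  by have [/(lt_le_trans y_gt0)] := yu0 j; rewrite ltxx.
by have [_ /eqP] := yu0 j; rewrite mulf_eq0 (gt_eqF u_gt0) orbF => /eqP.
Qed.

Lemma is_derive_scale (c x : R) : is_derive x 1 (fun b : R => c * b) c.
Proof.
by have := is_deriveZ c (is_derive_id x (1 : R)); rewrite /GRing.scale /= mulr1.
Qed.

Lemma is_derive_half_sqr (c x : R) :
  is_derive x 1 (fun b : R => 2^-1 * c * b ^+ 2) (c * x).
Proof.
have := is_deriveZ (2^-1 * c) (is_deriveX 2 (is_derive_id x (1 : R))).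
rewrite /GRing.scale /= expr1 mulr1.
by rewrite (_ : 2^-1 * c * (2 * x) = c * x) //; field.
Qed.

Lemma grad_separable k (f : 'cV[R]_k -> R) (psi : 'I_k -> R -> R)
    (dpsi : 'I_k -> R) (x : 'cV[R]_k) :
  (forall y, f y - \sum_j psi j (y j 0) = f x - \sum_j psi j (x j 0)) ->
  (forall j, is_derive (x j 0) 1 (psi j) (dpsi j)) -> grad f x = \col_j dpsi j.
Proof.
move=> fE psi_derive; apply/matrixP => i z; rewrite (ord1 z) !mxE.
pose K := \sum_(j | j != i) psi j (x j 0) + (f x - \sum_j psi j (x j 0)).
have -> : (fun s => f (x + s *: delta_mx i 0)) = (fun s => psi i (x i 0 + s) + K).
  apply/funext => s; move/(canRL (subrK _)): (fE (x + s *: delta_mx i 0)) ->.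
  rewrite [X in _ + X](bigD1 i) //= /K !mxE eqxx mulr1.
  have -> : \sum_(j | j != i) psi j ((x + s *: delta_mx i 0) j 0) =
            \sum_(j | j != i) psi j (x j 0).
    by apply: eq_bigr => j ji; rewrite !mxE (negbTE ji) mulr0 addr0.
  ring.
by rewrite derive1E; case: (is_derive_shift_add K (psi_derive i)).
Qed.

End Matrices.

Section Lagrangian.
Context {R : realType} {n m : nat}.
Context {J Jinv : 'I_n -> R -> R} {D : 'M[R]_n} {d : 'cV[R]_n}
  {C : 'M[R]_(n, m)} {B : 'M[R]_m} {H : 'M[R]_(n, m + m)} {F : 'cV[R]_(m + m)}.
Hypothesis diagD : is_diag_mx D.
Let Lh := Lhat J Jinv D d C B H F.

Lemma LhatE q th a lam eta nu :
  Lh q th a lam eta nu =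
    \sum_j (q j 0 * a j 0 - legendre (J j) (Jinv j) (a j 0))
  + \sum_j ((q - d - C *m B *m th) j 0 * nu j 0 - 2^-1 * D j j * nu j 0 ^+ 2)
  - lam * \sum_j (q - d) j 0
  + \sum_k (H^T *m (q - d) - F) k 0 * eta k 0.
Proof.
rewrite /Lh /Lhat /= !dotvE.
have E1 : \sum_j J j ((\col_j Jinv j (a j 0)) j 0)
          + \sum_j a j 0 * (q - \col_j Jinv j (a j 0)) j 0
        = \sum_j (q j 0 * a j 0 - legendre (J j) (Jinv j) (a j 0)).
  by rewrite -big_split; apply: eq_bigr => j _; rewrite /legendre !mxE /=; ring.
have E2 : - (2^-1 * \sum_j nu j 0 * (D *m nu) j 0)
          + \sum_j nu j 0 * (q - d - C *m B *m th) j 0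
        = \sum_j ((q - d - C *m B *m th) j 0 * nu j 0 - 2^-1 * D j j * nu j 0 ^+ 2).
  rewrite mulr_sumr -sumrN -big_split; apply: eq_bigr => j _ /=.
  by rewrite diag_mulmxE //; ring.
have E3 : \sum_j (const_mx 1 : 'cV[R]_n) j 0 * (q - d) j 0 = \sum_j (q - d) j 0.
  by apply: eq_bigr => j _; rewrite mxE mul1r.
have E4 : \sum_k eta k 0 * (H^T *m (q - d) - F) k 0
        = \sum_k (H^T *m (q - d) - F) k 0 * eta k 0.
  by apply: eq_bigr => k _; rewrite mulrC.
rewrite -E1 -E2 E3 E4; ring.
Qed.

Lemma grad_Lhat_nu q th a lam eta nu :
  grad (fun x => Lh q th a lam eta x) nu = q - d - C *m B *m th - D *m nu.
Proof.
pose r := q - d - C *m B *m th.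
transitivity (\col_j (r j 0 - D j j * nu j 0)); last first.
  by apply/matrixP => i z; rewrite (ord1 z) mxE -diag_mulmxE // /r !mxE.
apply: (@grad_separable _ _ _ (fun j b => r j 0 * b - 2^-1 * D j j * b ^+ 2)).
- by move=> y; rewrite !LhatE; ring.
- move=> j; apply: is_deriveB; first exact: is_derive_scale.
  exact: is_derive_half_sqr.
Qed.

Lemma grad_Lhat_eta q th a lam eta nu :
  grad (fun x => Lh q th a lam x nu) eta = H^T *m (q - d) - F.
Proof.
pose g := H^T *m (q - d) - F.
transitivity (\col_k g k 0); last by apply/matrixP => i z; rewrite (ord1 z) mxE.
apply: (@grad_separable _ _ _ (fun k b => g k 0 * b)) => [y|k].
  by rewrite !LhatE; ring.
exact: is_derive_scale.
Qed.

Lemma derive1_Lhat_lambda q th a lam eta nu :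
  derive1 (fun x => Lh q th a x eta nu) lam = - \sum_j (q - d) j 0.
Proof.
pose S := \sum_j (q - d) j 0.
have -> : (fun x => Lh q th a x eta nu) = (fun x => - S * x + Lh q th a 0 eta nu).
  by apply/funext => x; rewrite !LhatE /S; ring.
have := is_deriveD (is_derive_scale (- S) lam)
  (is_derive_cst (Lh q th a 0 eta nu) lam 1).
by rewrite derive1E => -[_ ->]; rewrite addr0.
Qed.

Lemma grad_Lhat_theta q th a lam eta nu :
  grad (fun x => Lh q x a lam eta nu) th = - ((C *m B)^T *m nu).
Proof.
pose c := (C *m B)^T *m nu.
have Lth y : Lh q y a lam eta nu =
    Lh q 0 a lam eta nu - \sum_i c i 0 * y i 0.
  rewrite /Lh /Lhat /= mulmx0 subr0 -dotvE /c -dotv_mulmx.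
  rewrite [dotv nu (q - d - _)]dotvBr.
  by move: (dotv nu (q - d)) (dotv nu (C *m B *m y)) => X Y; lra.
transitivity (\col_i (- c i 0)); last first.
  by apply/matrixP => i z; rewrite (ord1 z) !mxE.
apply: (@grad_separable _ _ _ (fun i b => - (c i 0 * b))) => [y|i].
  by rewrite (Lth y) (Lth th) !sumrN !opprK !subrK.
exact: is_deriveN (is_derive_scale _ _).
Qed.

Hypothesis convexJ : forall j, strictly_convex (J j).
Hypothesis twiceJ : forall j, twice_differentiable (J j).
Hypothesis derive1JK : forall j, cancel (derive1 (J j)) (Jinv j).
Hypothesis JinvK : forall j, cancel (Jinv j) (derive1 (J j)).

Let derivableJ j x : derivable (J j) x 1. Proof. by case: (twiceJ j x). Qed.

Lemma grad_Lhat_alpha q th a lam eta nu :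
  grad (fun x => Lh q th x lam eta nu) a = q - \col_j Jinv j (a j 0).
Proof.
transitivity (\col_j (q j 0 - Jinv j (a j 0))).
  apply: (@grad_separable _ _ _ (fun j b => q j 0 * b - legendre (J j) (Jinv j) b)).
    by move=> y; rewrite !LhatE; ring.
  move=> j; apply: is_deriveB; first exact: is_derive_scale.
  have d2J x : derivable (derive1 (J j)) x 1 by case: (twiceJ j x).
  exact: (is_derive_legendre (convexJ j) (derivableJ j) (JinvK j) d2J (derive1JK j)).
by apply/matrixP => i z; rewrite (ord1 z) !mxE.
Qed.

Lemma Lhat_equilibrium {qs ths als lams} {etas : 'cV[R]_(m + m)} {nus} :
  (forall k, 0 <= etas k 0) ->
  grad (fun x => Lh qs x als lams etas nus) ths = 0 ->
  grad (fun x => Lh qs ths x lams etas nus) als = 0 ->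
  derive1 (fun x => Lh qs ths als x etas nus) lams = 0 ->
  proj_plus (grad (fun x => Lh qs ths als lams x nus) etas) etas = 0 ->
  grad (fun x => Lh qs ths als lams etas x) nus = 0 ->
  [/\ qs = \col_j Jinv j (als j 0), qs - d - C *m B *m ths = D *m nus,
      (C *m B)^T *m nus = 0, \sum_j (qs - d) j 0 = 0 &
      forall k, (H^T *m (qs - d) - F) k 0 <= 0 /\
                (H^T *m (qs - d) - F) k 0 * etas k 0 = 0].
Proof.
move=> etas_ge0; rewrite grad_Lhat_theta grad_Lhat_alpha derive1_Lhat_lambda.
rewrite grad_Lhat_eta grad_Lhat_nu => /eqP; rewrite oppr_eq0 => /eqP thsE.
move=> /subr0_eq qsE /eqP; rewrite oppr_eq0 => /eqP balance.
by move=> /(proj_plus_eq0P etas_ge0) slackness /subr0_eq nusE.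
Qed.

Section Saddle.
Context {qs : 'cV[R]_n} {ths : 'cV[R]_m} {als : 'cV[R]_n} {lams : R}
  {etas : 'cV[R]_(m + m)} {nus : 'cV[R]_n}.
Let g := H^T *m (qs - d) - F.
Hypothesis qsE : qs = \col_j Jinv j (als j 0).
Hypothesis nusE : qs - d - C *m B *m ths = D *m nus.
Hypothesis balance : \sum_j (qs - d) j 0 = 0.
Hypothesis slackness : forall k, g k 0 <= 0 /\ g k 0 * etas k 0 = 0.

Lemma Lhat_saddle_gap a lam eta nu :
  Lh qs ths als lams etas nus - Lh qs ths a lam eta nu =
    \sum_j (legendre (J j) (Jinv j) (a j 0) - legendre (J j) (Jinv j) (als j 0)
            - Jinv j (als j 0) * (a j 0 - als j 0))
  + \sum_j 2^-1 * D j j * (nu j 0 - nus j 0) ^+ 2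
  - \sum_k g k 0 * eta k 0.
Proof.
rewrite !LhatE balance !mulr0 !subr0 -/g.
have -> : \sum_k g k 0 * etas k 0 = 0 by apply: big1 => k _; case: (slackness k).
set A := \sum_j (legendre _ _ _ - _ - _); set N := \sum_j 2^-1 * _ * _.
have EA : \sum_j (qs j 0 * als j 0 - legendre (J j) (Jinv j) (als j 0))
        - \sum_j (qs j 0 * a j 0 - legendre (J j) (Jinv j) (a j 0)) = A.
  by rewrite -sumrB; apply: eq_bigr => j _ /=; rewrite qsE mxE; lra.
have EN : \sum_j ((qs - d - C *m B *m ths) j 0 * nus j 0 - 2^-1 * D j j * nus j 0 ^+ 2)
        - \sum_j ((qs - d - C *m B *m ths) j 0 * nu j 0 - 2^-1 * D j j * nu j 0 ^+ 2) = N.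
  by rewrite -sumrB; apply: eq_bigr => j _ /=; rewrite nusE diag_mulmxE //; lra.
lra.
Qed.

Hypothesis D_gt0 : forall j, 0 < D j j.

Lemma Lhat_saddle_eq {a lam} {eta : 'cV[R]_(m + m)} {nu} : (forall k, 0 <= eta k 0) ->
  Lh qs ths a lam eta nu = Lh qs ths als lams etas nus ->
  [/\ a = als, nu = nus & forall k, g k 0 * eta k 0 = 0].
Proof.
move=> eta_ge0 Leq.
pose A j := legendre (J j) (Jinv j) (a j 0) - legendre (J j) (Jinv j) (als j 0)
            - Jinv j (als j 0) * (a j 0 - als j 0).
pose N j := 2^-1 * D j j * (nu j 0 - nus j 0) ^+ 2.
pose E k := - (g k 0 * eta k 0).
have gap : \sum_j A j + \sum_j N j + \sum_k E k = 0.
  by rewrite sumrN -(Lhat_saddle_gap a lam eta nu) Leq subrr.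
have A_ge0 j : 0 <= A j.
  rewrite /A subr_ge0 lerBrDr addrC.
  exact: (legendre_tangent_le (convexJ j) (derivableJ j) (JinvK j)).
have N_ge0 j : 0 <= N j.
  by rewrite /N mulr_ge0 ?sqr_ge0 // mulr_ge0 ?ltW // invr_ge0 ler0n.
have E_ge0 k : 0 <= E k by rewrite /E oppr_ge0 mulr_le0_ge0 //; case: (slackness k).
have SA : 0 <= \sum_j A j by apply: sumr_ge0 => j _.
have SN : 0 <= \sum_j N j by apply: sumr_ge0 => j _.
have SE : 0 <= \sum_k E k by apply: sumr_ge0 => k _.
have /(psumr_eq0P (fun j _ => A_ge0 j)) A0 : \sum_j A j = 0 by lra.
have /(psumr_eq0P (fun j _ => N_ge0 j)) N0 : \sum_j N j = 0 by lra.
have /(psumr_eq0P (fun k _ => E_ge0 k)) E0 : \sum_k E k = 0 by lra.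
split.
- apply/matrixP => j z; rewrite (ord1 z); apply/eqP/negPn/negP => aj.
  have := legendre_tangent_lt (convexJ j) (derivableJ j) (JinvK j) (als j 0) (a j 0) aj.
  by have := A0 j isT; rewrite /A; lra.
- apply/matrixP => j z; rewrite (ord1 z); have := N0 j isT; rewrite /N => /eqP.
  rewrite mulf_eq0 sqrf_eq0 mulf_eq0 invr_eq0 pnatr_eq0 (gt_eqF (D_gt0 j)).
  by rewrite subr_eq0 => /eqP.
- by move=> k; apply: oppr_inj; rewrite oppr0; exact: E0.
Qed.

End Saddle.
End Lagrangian.

Section Trajectories.
Context {R : realType} {k : nat}.
Implicit Types (x : R -> 'cV[R]_k) (t : R).

Lemma dvec_eq0_const {x c t} : 0 <= t -> vderivable x t ->
  (forall s, 0 <= s -> x s = c) -> dvec x t = 0.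
Proof.
move=> t0 dx xc; apply/matrixP => i z; rewrite (ord1 z) !mxE.
apply: derive1_eq0_right (dx i) _ => s ts.
by rewrite xc ?(le_trans t0 ts) // xc.
Qed.

Lemma proj_dynamics_nonneg {T : 'M[R]_k} {x} {y : R -> 'cV[R]_k} :
  posdiag T -> (forall t, 0 <= t -> vderivable x t) ->
  (forall t, 0 <= t -> T *m dvec x t = proj_plus (y t) (x t)) ->
  (forall i, 0 <= x 0 i 0) -> forall t i, 0 <= t -> 0 <= x t i 0.
Proof.
move=> T_pos dx dyn x0_ge0 t i.
apply: (nonneg_forward_invariant (fun s => x s i 0) 0) => // [s /dx //|s s0 xs_lt0].
suff : 0 <= dvec x s i 0 by rewrite mxE.
apply: (posdiag_mulmx_ge0 i T_pos).
rewrite dyn // mxE (lt_gtF xs_lt0) orbF lt_def.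
by case: ifP => // /andP[_ ->].
Qed.

End Trajectories.

Theorem proposition2 (R : realType) (n m : nat)
  (src dst : 'I_m -> 'I_n)
  (B : 'M[R]_m) (D : 'M[R]_n) (Ldag : 'M[R]_n)
  (Fbar Funder : 'cV[R]_m) (d : 'cV[R]_n)
  (J Jinv : 'I_n -> R -> R)
  (Tq : 'M[R]_n) (Tth : 'M[R]_m) (Ta : 'M[R]_n) (Tlam : R)
  (Teta : 'M[R]_(m + m)) (Tnu : 'M[R]_n)
  (qs : 'cV[R]_n) (ths : 'cV[R]_m) (als : 'cV[R]_n) (lams : R)
  (etas : 'cV[R]_(m + m)) (nus : 'cV[R]_n)
  (q : R -> 'cV[R]_n) (th : R -> 'cV[R]_m) (al : R -> 'cV[R]_n)
  (lam : R -> R) (eta : R -> 'cV[R]_(m + m)) (nu : R -> 'cV[R]_n) :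
  let C := incidence R src dst in
  let L := C *m B *m C^T in
  let H := Hmat C B Ldag in
  let F := col_mx Fbar (- Funder) in
  let Lh := Lhat J Jinv D d C B H F in
  connected_digraph src dst ->
  posdiag B -> posdiag D ->
  is_MP_inverse L Ldag ->
  (forall j, strictly_convex (J j)) ->
  (forall j, twice_differentiable (J j)) ->
  (forall j, cancel (derive1 (J j)) (Jinv j)) ->
  (forall j, cancel (Jinv j) (derive1 (J j))) ->
  posdiag Tq -> posdiag Tth -> posdiag Ta -> 0 < Tlam ->
  posdiag Teta -> posdiag Tnu ->
  (* (zs, sigmas) is an equilibrium, with etas >= 0 *)
  (forall j, 0 <= etas j 0) ->
  grad (fun x => Lh x ths als lams etas nus) qs = 0 ->
  grad (fun x => Lh qs x als lams etas nus) ths = 0 ->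
  grad (fun x => Lh qs ths x lams etas nus) als = 0 ->
  derive1 (fun x => Lh qs ths als x etas nus) lams = 0 ->
  proj_plus (grad (fun x => Lh qs ths als lams x nus) etas) etas = 0 ->
  grad (fun x => Lh qs ths als lams etas x) nus = 0 ->
  (* (z(t), sigma(t)) is a trajectory of the closed-loop system for t >= 0 *)
  (forall t, 0 <= t ->
     [/\ vderivable q t, vderivable th t, vderivable al t,
         derivable lam t 1 & vderivable eta t /\ vderivable nu t]) ->
  (forall t, 0 <= t ->
     Tq *m dvec q t =
       - grad (fun x => Lh x (th t) (al t) (lam t) (eta t) (nu t)) (q t)) ->
  (forall t, 0 <= t ->
     Tth *m dvec th t =
       - grad (fun x => Lh (q t) x (al t) (lam t) (eta t) (nu t)) (th t)) ->
  (forall t, 0 <= t ->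
     Ta *m dvec al t =
       grad (fun x => Lh (q t) (th t) x (lam t) (eta t) (nu t)) (al t)) ->
  (forall t, 0 <= t ->
     Tlam * derive1 lam t =
       derive1 (fun x => Lh (q t) (th t) (al t) x (eta t) (nu t)) (lam t)) ->
  (forall t, 0 <= t ->
     Teta *m dvec eta t =
       proj_plus (grad (fun x => Lh (q t) (th t) (al t) (lam t) x (nu t)) (eta t))
                 (eta t)) ->
  (forall t, 0 <= t ->
     Tnu *m dvec nu t =
       grad (fun x => Lh (q t) (th t) (al t) (lam t) (eta t) x) (nu t)) ->
  (forall j, 0 <= eta 0 j 0) ->
  (forall t, 0 <= t -> Lh qs ths (al t) (lam t) (eta t) (nu t) =
                       Lh qs ths als lams etas nus) ->
  (forall t, 0 <= t -> Lh (q t) (th t) als lams etas nus =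
                       Lh qs ths als lams etas nus) ->
  forall t, 0 <= t ->
    [/\ dvec q t = 0, dvec th t = 0, dvec al t = 0,
        derive1 lam t = 0 & dvec eta t = 0 /\ dvec nu t = 0].

Proof.
move=> C L H F Lh _ _ [diagD D_gt0] _ convexJ twiceJ derive1JK JinvK _ Tth_pos _
  Tlam_gt0 Teta_pos _ etas_ge0 _ Eth Ea Elam Eeta Enu traj _ Dth Da Dlam Deta _
  eta0_ge0 L_sigma _ t t0.
have [qsE nusE thsE balance slackness] := Lhat_equilibrium diagD convexJ twiceJ
  derive1JK JinvK etas_ge0 Eth Ea Elam Eeta Enu.
have deta s : 0 <= s -> vderivable eta s by move=> /traj [_ _ _ _ []].
have eta_ge0 := proj_dynamics_nonneg Teta_pos deta Deta eta0_ge0.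
have sigmaE := fun s (s0 : 0 <= s) => Lhat_saddle_eq diagD convexJ twiceJ JinvK
  qsE nusE balance slackness D_gt0 (fun k => eta_ge0 s k s0) (L_sigma s s0).
have alE s : 0 <= s -> al s = als by move=> /sigmaE [].
have nuE s : 0 <= s -> nu s = nus by move=> /sigmaE [].
have dal s : 0 <= s -> dvec al s = 0.
  by move=> s0; case: (traj s s0) => _ _ dal0 _ _; exact: dvec_eq0_const s0 dal0 alE.
have qE s : 0 <= s -> q s = qs.
  move=> s0; have := Da s s0; rewrite dal // mulmx0 grad_Lhat_alpha // alE // -qsE.
  by move=> /esym /subr0_eq.
have [dq _ _ _ [_ dnu]] := traj t t0.
split; [exact: dvec_eq0_const t0 dq qE | | exact: dal | | split].
- apply: (posdiag_mulmx_eq0 Tth_pos).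
  by rewrite Dth // grad_Lhat_theta // nuE // thsE !oppr0.
- have := Dlam t t0; rewrite derive1_Lhat_lambda // qE // balance oppr0 => /eqP.
  by rewrite mulf_eq0 (gt_eqF Tlam_gt0) => /eqP.
- apply: (posdiag_mulmx_eq0 Teta_pos); rewrite Deta // grad_Lhat_eta // qE //.
  apply/proj_plus_eq0P => [k|k]; first exact: eta_ge0.
  by have [_ _ ->] := sigmaE t t0; case: (slackness k).
- exact: dvec_eq0_const t0 dnu nuE.
Qed.
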